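(* Let $f\in\mathcal{A}$. If $\left|\left(\frac{f(z)}{z}\right)'\right|<\frac12$ for all $z\in\Delta\setminus\{0\}$, then $f\in\Omega$. Moreover the constant $\tfrac12$ cannot be replaced by any larger constant: for every $\lambda>\tfrac12$, the function $\widehat f_\lambda(z)=z+\lambda z^2$ satisfies $\left(\widehat f_\lambda(z)/z\right)'=\lambda$ but $\widehat f_\lambda\notin\Omega$.
   Context: $\Delta=\{z\in\mathbb{C}:|z|<1\}$. $\mathcal{A}$ is the class of functions $f$ analytic in $\Delta$ with $f(0)=0$, $f'(0)=1$. $\Omega$ is the class of $f\in\mathcal{A}$ with $|zf'(z)-f(z)|<\tfrac12$ for all $z\in\Delta$. *)

From Stdlib Require Import Reals.
Open Scope R_scope.

Definition Cplx : Type := (R * R)%type.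
Definition RtoC (x : R) : Cplx := (x, 0).
Definition Cadd (z w : Cplx) : Cplx := (fst z + fst w, snd z + snd w).
Definition Copp (z : Cplx) : Cplx := (- fst z, - snd z).
Definition Csub (z w : Cplx) : Cplx := Cadd z (Copp w).
Definition Cmul (z w : Cplx) : Cplx :=
  (fst z * fst w - snd z * snd w, fst z * snd w + snd z * fst w).
Definition Cinv (z : Cplx) : Cplx :=
  (fst z / (fst z ^ 2 + snd z ^ 2), - snd z / (fst z ^ 2 + snd z ^ 2)).
Definition Cdiv (z w : Cplx) : Cplx := Cmul z (Cinv w).
Definition Cmod (z : Cplx) : R := sqrt (fst z ^ 2 + snd z ^ 2).
Definition C0 : Cplx := (0, 0).
Definition C1 : Cplx := (1, 0).

Definition has_cderiv (f : Cplx -> Cplx) (z l : Cplx) : Prop :=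
  forall eps : R, 0 < eps -> exists delta : R, 0 < delta /\
    forall h : Cplx, 0 < Cmod h < delta ->
      Cmod (Csub (Cdiv (Csub (f (Cadd z h)) (f z)) h) l) < eps.

Definition analytic_in_disc (f : Cplx -> Cplx) : Prop :=
  forall z : Cplx, Cmod z < 1 -> exists l : Cplx, has_cderiv f z l.

Definition in_A (f : Cplx -> Cplx) : Prop :=
  analytic_in_disc f /\ f C0 = C0 /\ has_cderiv f C0 C1.

Definition in_Omega (f : Cplx -> Cplx) : Prop :=
  in_A f /\
  forall z : Cplx, Cmod z < 1 -> exists d : Cplx, has_cderiv f z d /\
    Cmod (Csub (Cmul z d) (f z)) < 1 / 2.

(* For z <> 0 the quotient rule gives z f'(z) - f(z) = z^2 (f(z)/z)', so
   |z f'(z) - f(z)| = |z|^2 |(f(z)/z)'| < 1/2 on the punctured disc, while at z = 0 the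
   expression vanishes.  For fhat z = z + lam z^2 the quotient fhat(z)/z = 1 + lam z has
   derivative lam, but z fhat'(z) - fhat(z) = lam z^2 has modulus 1/2 at the real point
   z = sqrt (1 / (2 lam)), which lies in the disc as soon as lam > 1/2. *)

From Stdlib Require Import Reals Lra.
From Pilot Require Import Defs.
From Coquelicot Require Import Coquelicot.
Open Scope R_scope.

(* The complex operations of Defs are definitionally those of Coquelicot, whose names
   (Cmod, Cdiv, RtoC, ...) shadow them from here on. *)

Lemma has_cderiv_iff (F : C -> C) (z l : C) :
  has_cderiv F z l <->
  forall eps, 0 < eps -> exists delta, 0 < delta /\
    forall h : C, 0 < Cmod h < delta -> Cmod ((F (z + h) - F z) / h - l)%C < eps.
Proof. reflexivity. Qed.

Lemma Cmod_minus_le (x y : C) : Cmod (x - y) <= Cmod x + Cmod y.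
Proof. rewrite <- (Cmod_opp y). apply Cmod_triangle. Qed.

Lemma Cmod_plus_ge (x y : C) : Cmod x - Cmod y <= Cmod (x + y).
Proof.
  pose proof (Cmod_minus_le (x + y) y) as H.
  replace (x + y - y)%C with x in H by ring. lra.
Qed.

Lemma has_cderiv_unique (F : C -> C) (z a b : C) :
  has_cderiv F z a -> has_cderiv F z b -> a = b.
Proof.
  rewrite !has_cderiv_iff. intros Ha Hb.
  destruct (Req_dec (Cmod (a - b)) 0) as [E | Hab].
  - apply Cmod_eq_0 in E.
    replace a with ((a - b) + b)%C by ring. rewrite E. ring.
  - exfalso.
    set (e := Cmod (a - b) / 2).
    assert (He : 0 < e) by (pose proof (Cmod_ge_0 (a - b)); unfold e; lra).
    destruct (Ha e He) as [da [Hda Ha']]. destruct (Hb e He) as [db [Hdb Hb']].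
    set (t := Rmin da db / 2).
    assert (Ht : 0 < t < Rmin da db).
    { assert (0 < Rmin da db) by (apply Rmin_glb_lt; lra). unfold t. lra. }
    pose proof (Rmin_l da db). pose proof (Rmin_r da db).
    assert (Hh : Cmod t = t) by (rewrite Cmod_R; apply Rabs_pos_eq; lra).
    specialize (Ha' t ltac:(lra)). specialize (Hb' t ltac:(lra)).
    set (q := ((F (z + t) - F z) / t)%C) in *.
    pose proof (Cmod_minus_le (q - b) (q - a)) as T.
    replace (q - b - (q - a))%C with (a - b)%C in T by ring.
    unfold e in *. lra.
Qed.

Lemma has_cderiv_const (c z : C) : has_cderiv (fun _ => c) z (RtoC 0).
Proof.
  apply has_cderiv_iff. intros eps Heps.
  exists 1. split; [lra |]. intros h [Hh _].
  replace ((c - c) / h - 0)%C with (RtoC 0) by (field; apply Cmod_gt_0, Hh).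
  rewrite Cmod_0. exact Heps.
Qed.

Lemma has_cderiv_of_quotient_dominated (f F : C -> C) (z l L : C) (r A K : R) :
  has_cderiv f z l -> 0 < r -> 0 <= A -> 0 <= K ->
  (forall h : C, 0 < Cmod h < r ->
     Cmod ((F (z + h) - F z) / h - L)%C
       <= A * Cmod ((f (z + h) - f z) / h - l)%C + K * Cmod h) ->
  has_cderiv F z L.
Proof.
  rewrite !has_cderiv_iff. intros Hf Hr HA HK Hdom eps Heps.
  destruct (Hf (eps / (2 * (A + 1)))) as [d [Hd Hfd]].
  { apply Rdiv_lt_0_compat; lra. }
  set (e := eps / (2 * (K + 1))).
  assert (He : 0 < e) by (apply Rdiv_lt_0_compat; lra).
  exists (Rmin r (Rmin d e)). split.
  { repeat apply Rmin_glb_lt; lra. }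
  intros h [Hh0 Hh].
  pose proof (Rmin_l r (Rmin d e)). pose proof (Rmin_r r (Rmin d e)).
  pose proof (Rmin_l d e). pose proof (Rmin_r d e).
  specialize (Hdom h ltac:(lra)). specialize (Hfd h ltac:(lra)).
  assert (XA : A * (eps / (2 * (A + 1))) < eps / 2).
  { apply (Rmult_lt_reg_l (2 * (A + 1))); [lra |]. field_simplify; lra. }
  assert (XK : K * e < eps / 2).
  { apply (Rmult_lt_reg_l (2 * (K + 1))); [lra |]. unfold e. field_simplify; lra. }
  pose proof (Cmod_ge_0 ((f (z + h) - f z) / h - l)%C).
  nra.
Qed.

Lemma has_cderiv_of_quotient_bound (F : C -> C) (z L : C) (r K : R) :
  0 < r -> 0 <= K ->
  (forall h : C, 0 < Cmod h < r -> Cmod ((F (z + h) - F z) / h - L)%C <= K * Cmod h) ->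
  has_cderiv F z L.
Proof.
  intros Hr HK Hbound.
  apply (has_cderiv_of_quotient_dominated (fun _ => RtoC 0) F z (RtoC 0) L r 0 K);
    [apply has_cderiv_const | lra | lra | lra |].
  intros h Hh. rewrite Rmult_0_l, Rplus_0_l. exact (Hbound h Hh).
Qed.

Lemma has_cderiv_div_id (f : C -> C) (z l : C) : z <> 0 -> has_cderiv f z l ->
  has_cderiv (fun w => f w / w)%C z ((z * l - f z) / (z * z))%C.
Proof.
  intros Hz Hf. apply Cmod_gt_0 in Hz as Hz_pos.
  set (M := ((z * l - f z) / (z * z))%C).
  assert (HA : 0 < 2 / Cmod z) by (apply Rdiv_lt_0_compat; lra).
  pose proof (Cmod_ge_0 M).
  apply (has_cderiv_of_quotient_dominated f _ z l M (Cmod z / 2) (2 / Cmod z)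
           (2 / Cmod z * Cmod M) Hf); [lra | lra | nra |].
  intros h [Hh0 Hh].
  pose proof (Cmod_plus_ge z h).
  assert (Nh : h <> 0) by (apply Cmod_gt_0; exact Hh0).
  assert (Nzh : (z + h)%C <> 0) by (apply Cmod_gt_0; lra).
  assert (Hdiv : forall X : C, Cmod (X / (z + h)) <= 2 / Cmod z * Cmod X).
  { intros X. rewrite Cmod_div by exact Nzh.
    assert (/ Cmod (z + h) <= 2 / Cmod z).
    { replace (2 / Cmod z) with (/ (Cmod z / 2)) by (field; lra).
      apply Rinv_le_contravar; lra. }
    pose proof (Cmod_ge_0 X). unfold Rdiv in *. nra. }
  replace ((f (z + h) / (z + h) - f z / z) / h - M)%C
    with (((f (z + h) - f z) / h - l) / (z + h) - h * M / (z + h))%C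
    by (unfold M; field; auto).
  eapply Rle_trans; [apply Cmod_minus_le |].
  pose proof (Hdiv ((f (z + h) - f z) / h - l)%C).
  pose proof (Hdiv (h * M)%C). rewrite Cmod_mult in *.
  lra.
Qed.

Lemma mul_cderiv_sub_eq (f : C -> C) (z l d : C) : z <> 0 -> has_cderiv f z l ->
  has_cderiv (fun w => f w / w)%C z d -> (z * l - f z = z * z * d)%C.
Proof.
  intros Hz Hl Hd.
  rewrite (has_cderiv_unique _ _ _ _ Hd (has_cderiv_div_id f z l Hz Hl)).
  field. exact Hz.
Qed.

Lemma in_Omega_of_cderiv_div_id_lt (f : C -> C) : in_A f ->
  (forall z : C, 0 < Cmod z < 1 ->
     exists d, has_cderiv (fun w => f w / w)%C z d /\ Cmod d < 1 / 2) ->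
  in_Omega f.
Proof.
  intros HA Hdiv. split; [exact HA |].
  destruct HA as [Han [Hf0 Hf1]]. intros z Hz. change (Cmod z < 1) in Hz.
  destruct (Req_dec (Cmod z) 0) as [Ez | Nz].
  - apply Cmod_eq_0 in Ez. subst z.
    exists C1. split; [exact Hf1 |].
    change (f 0 = 0) in Hf0. change (Cmod (0 * 1 - f 0)%C < 1 / 2). rewrite Hf0.
    replace (0 * 1 - 0)%C with (RtoC 0) by ring. rewrite Cmod_0. lra.
  - pose proof (Cmod_ge_0 z).
    destruct (Han z Hz) as [l Hl]. exists l. split; [exact Hl |].
    destruct (Hdiv z ltac:(lra)) as [d [Hd Hd_lt]].
    change (Cmod (z * l - f z)%C < 1 / 2).
    assert (Hz0 : z <> RtoC 0) by (apply Cmod_gt_0; lra).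
    rewrite (mul_cderiv_sub_eq f z l d Hz0 Hl Hd).
    rewrite !Cmod_mult. pose proof (Cmod_ge_0 d). nra.
Qed.

Definition fhat (lam : R) (z : C) : C := (z + lam * (z * z))%C.

Lemma has_cderiv_fhat (lam : R) (z : C) : has_cderiv (fhat lam) z (1 + 2 * lam * z)%C.
Proof.
  apply (has_cderiv_of_quotient_bound _ _ _ 1 (Rabs lam)); [lra | apply Rabs_pos |].
  intros h [Hh _].
  replace ((fhat lam (z + h) - fhat lam z) / h - (1 + 2 * lam * z))%C with (lam * h)%C
    by (unfold fhat; field; apply Cmod_gt_0, Hh).
  rewrite Cmod_mult, Cmod_R. lra.
Qed.

Lemma has_cderiv_fhat_div_id (lam : R) (z : C) : z <> 0 ->
  has_cderiv (fun w => fhat lam w / w)%C z (RtoC lam).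
Proof.
  intros Hz. apply Cmod_gt_0 in Hz as Hz_pos.
  apply (has_cderiv_of_quotient_bound _ _ _ (Cmod z) 0); [exact Hz_pos | lra |].
  intros h [Hh0 Hh].
  pose proof (Cmod_plus_ge z h).
  assert (Nh : h <> 0) by (apply Cmod_gt_0; exact Hh0).
  assert (Nzh : (z + h)%C <> 0) by (apply Cmod_gt_0; lra).
  replace ((fhat lam (z + h) / (z + h) - fhat lam z / z) / h - lam)%C with (RtoC 0)
    by (unfold fhat; field; auto).
  rewrite Cmod_0. lra.
Qed.

Lemma in_A_fhat (lam : R) : in_A (fhat lam).
Proof.
  split; [| split].
  - intros z _. eexists. apply has_cderiv_fhat.
  - change (fhat lam 0 = 0). unfold fhat. ring.
  - change (has_cderiv (fhat lam) (RtoC 0) (RtoC 1)).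
    replace (RtoC 1) with (1 + 2 * lam * 0)%C by ring.
    apply has_cderiv_fhat.
Qed.

Lemma not_in_Omega_fhat (lam : R) : 1 / 2 < lam -> ~ in_Omega (fhat lam).
Proof.
  intros Hlam [_ HOmega].
  set (r := sqrt (/ (2 * lam))).
  assert (Hr2 : r * r = / (2 * lam)).
  { apply sqrt_sqrt, Rlt_le, Rinv_0_lt_compat. lra. }
  assert (Hr0 : 0 <= r) by apply sqrt_pos.
  assert (Hr1 : r < 1).
  { assert (/ (2 * lam) < 1) by (rewrite <- Rinv_1; apply Rinv_lt_contravar; lra). nra. }
  assert (Hmod : Cmod r = r) by (rewrite Cmod_R; apply Rabs_pos_eq, Hr0).
  destruct (HOmega (RtoC r) ltac:(change (Cmod r < 1); lra)) as [d [Hd Hlt]].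
  rewrite (has_cderiv_unique _ _ _ _ Hd (has_cderiv_fhat lam r)) in Hlt.
  change (Cmod (r * (1 + 2 * lam * r) - fhat lam r)%C < 1 / 2) in Hlt.
  replace (r * (1 + 2 * lam * r) - fhat lam r)%C with (RtoC (lam * (r * r))) in Hlt
    by (unfold fhat; rewrite !RtoC_mult; ring).
  rewrite Cmod_R, Rabs_pos_eq in Hlt by nra.
  rewrite Hr2 in Hlt. field_simplify in Hlt; lra.
Qed.

(* Restore the names of Defs for the statement. *)
Import Defs.

Theorem lemma4p1 :
  (forall f : Cplx -> Cplx, in_A f ->
     (forall z : Cplx, 0 < Cmod z < 1 ->
        exists d : Cplx, has_cderiv (fun w => Cdiv (f w) w) z d /\ Cmod d < 1 / 2) ->
     in_Omega f)
  /\
  (forall lam : R, 1 / 2 < lam ->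
     let fh := fun z : Cplx => Cadd z (Cmul (RtoC lam) (Cmul z z)) in
     in_A fh /\
     (forall z : Cplx, 0 < Cmod z < 1 ->
        has_cderiv (fun w => Cdiv (fh w) w) z (RtoC lam)) /\
     ~ in_Omega fh).
Proof.
  split.
  - exact in_Omega_of_cderiv_div_id_lt.
  - intros lam Hlam fh. split; [| split].
    + exact (in_A_fhat lam).
    + intros z [Hz _]. apply has_cderiv_fhat_div_id, Cmod_gt_0, Hz.
    + exact (not_in_Omega_fhat lam Hlam).
Qed.
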